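(* For integers $n\ge 0$ and $p$ with $p\le n+1$, $$\sum_{j,k}\binom{n}{k}\genfrac{\{}{\}}{0pt}{}{k}{j}\genfrac{[}{]}{0pt}{}{j+1}{p}(-1)^j=\begin{cases}0,&(n+1>p)\\(-1)^n,&(n+1=p).\end{cases}$$
   Context: Here $\genfrac{[}{]}{0pt}{}{n}{k}$ denotes the unsigned (absolute) Stirling number of the first kind and $\genfrac{\{}{\}}{0pt}{}{n}{k}$ the ordinary Stirling number of the second kind (Knuth's notation), with $\genfrac{[}{]}{0pt}{}{0}{0}=\genfrac{\{}{\}}{0pt}{}{0}{0}=1$, $\genfrac{[}{]}{0pt}{}{n}{0}=\genfrac{\{}{\}}{0pt}{}{n}{0}=0$ for $n>0$, and $\genfrac{[}{]}{0pt}{}{n}{k}=\genfrac{\{}{\}}{0pt}{}{n}{k}=0$ for $0\le n<k$. The double sum is over all integers $j,k$ with $0\le j\le k\le n$. *)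

From mathcomp Require Import all_boot all_order all_algebra.
Set Implicit Arguments. Unset Strict Implicit. Unset Printing Implicit Defensive.
Import GRing.Theory Num.Theory.

Fixpoint stirling1 (n k : nat) : nat :=
  match n, k with
  | 0, 0 => 1
  | 0, _.+1 => 0
  | _.+1, 0 => 0
  | n'.+1, k'.+1 => n' * stirling1 n' k + stirling1 n' k'
  end.

Fixpoint stirling2 (n k : nat) : nat :=
  match n, k with
  | 0, 0 => 1
  | 0, _.+1 => 0
  | _.+1, 0 => 0
  | n'.+1, k'.+1 => k * stirling2 n' k + stirling2 n' k'
  end.

Definition stirling1z (n : nat) (k : int) : nat :=
  match k with
  | Posz k' => stirling1 n k'
  | Negz _ => 0
  end.

Example s1_check : [:: stirling1 4 1; stirling1 4 2; stirling1 4 3; stirling1 4 4] = [:: 6; 11; 6; 1].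
Proof. by []. Qed.
Example s2_check : [:: stirling2 4 1; stirling2 4 2; stirling2 4 3; stirling2 4 4] = [:: 1; 7; 6; 1].
Proof. by []. Qed.

From mathcomp Require Import all_boot all_order all_algebra zify.
Import GRing.Theory Num.Theory.

(* Exchanging the two sums and using {n+1, j+1} = sum_k C(n,k) {k, j} turns
   the left side into sum_j (-1)^j {n+1, j+1} [j+1, p], i.e. minus the
   alternating sum sum_m (-1)^m {n+1, m} [m, p] (its m = 0 term vanishes).
   By the orthogonality of the two kinds of Stirling numbers the latter is
   (-1)^p when p = n + 1 and 0 otherwise. *)

Lemma stirling2_small k j : (k < j)%N -> stirling2 k j = 0%N.
Proof. by elim: k j => [|k IHk] [|j] //= ltkj; rewrite !IHk ?muln0 // ltnW. Qed.

Lemma stirling2S n j :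
  stirling2 n.+1 j = (j * stirling2 n j + (if j is j'.+1 then stirling2 n j' else 0))%N.
Proof. by case: j => [|j] //=; rewrite muln0. Qed.

Lemma stirling1S n p :
  stirling1 n.+1 p = (n * stirling1 n p + (if p is p'.+1 then stirling1 n p' else 0))%N.
Proof. by case: p => [|p] //=; case: n => [|n] //=; rewrite ?addn0 ?muln0. Qed.

Arguments stirling2 : simpl never.
Arguments stirling1 : simpl never.

Lemma sum_binS n (f : nat -> nat) :
  (\sum_(k < n.+2) 'C(n.+1, k) * f k = \sum_(k < n.+1) 'C(n, k) * (f k + f k.+1))%N.
Proof.
rewrite big_ord_recl bin0 mul1n.
under eq_bigr => k _ do rewrite lift0 binS mulnDl.
under [RHS]eq_bigr => k _ do rewrite mulnDr.
rewrite !big_split /= addnA; congr (_ + _)%N.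
by rewrite [RHS]big_ord_recl big_ord_recr /= bin_small // mul0n addn0 bin0 mul1n.
Qed.

Lemma sum_bin_stirling2 n j :
  (\sum_(k < n.+1) 'C(n, k) * stirling2 k j)%N = stirling2 n.+1 j.+1.
Proof.
elim: n j => [|n IHn] j.
  by rewrite big_ord1 bin0 mul1n stirling2S (@stirling2_small 0 j.+1) ?muln0.
rewrite (sum_binS n (stirling2^~ j)).
under eq_bigr => k _ do rewrite stirling2S mulnDr mulnDr mulnCA.
rewrite !big_split -big_distrr /= !IHn [in RHS]stirling2S.
case: j => [|j]; last by rewrite IHn; lia.
by rewrite big1 => [|k _]; rewrite ?muln0 // (stirling2S n 0); lia.
Qed.

Local Open Scope ring_scope.

Lemma stirling1S_sub i p :
  (i * stirling1 i p)%:Z - (stirling1 i.+1 p)%:Z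
  = - (if p is p'.+1 then stirling1 i p' else 0)%:Z.
Proof. by rewrite stirling1S PoszD opprD addrA subrr add0r. Qed.

(* After expanding {N+1, m} by its recurrence, m {N, m} [m, p] cancels
   against part of the recurrence for [m+1, p]; the rest lowers N and p. *)
Lemma sum_stirling2S_stirling1 N p M : (N < M)%N ->
  \sum_(m < M.+1) (-1) ^+ m * (stirling2 N.+1 m * stirling1 m p)%:Z
  = - \sum_(i < M) (-1) ^+ i *
        (stirling2 N i * (if p is p'.+1 then stirling1 i p' else 0))%:Z.
Proof.
move=> ltNM.
under eq_bigr => m _ do rewrite stirling2S mulnDl PoszD mulrDr.
rewrite big_split /= big_ord_recr big_ord_recl /= stirling2_small //.
rewrite muln0 mul0n mulr0 addr0 add0r.
rewrite -sumrN -big_split /=; apply: eq_bigr => i _.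
rewrite /bump /= add0n add1n exprS mulN1r mulNr -mulrBr -mulrN; congr (_ * _).
by rewrite -mulnA mulnCA !PoszM -mulrBr stirling1S_sub mulrN.
Qed.

Lemma stirling_orthogonality N p M : (N < M)%N ->
  \sum_(m < M) (-1) ^+ m * (stirling2 N m * stirling1 m p)%:Z
  = (if N == p then (-1) ^+ p else 0).
Proof.
elim: N p M => [|N IHN] p [|M] // ltNM.
  rewrite big_ord_recl big1 => [|i _]; last first.
    by rewrite lift0 stirling2_small ?mul0n ?mulr0.
  by rewrite addr0; case: p.
rewrite sum_stirling2S_stirling1 //; case: p => [|p].
  by rewrite big1 ?oppr0 // => i _; rewrite muln0 mulr0.
by rewrite IHN // eqSS; case: eqP; rewrite ?oppr0 // exprS mulN1r.
Qed.

Lemma stirling_orthogonality_shift n p :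
  \sum_(j < n.+1) (-1) ^+ j * (stirling2 n.+1 j.+1 * stirling1 j.+1 p)%:Z
  = (if n.+1 == p then (-1) ^+ n else 0).
Proof.
have := @stirling_orthogonality n.+1 p n.+2 (ltnSn n.+1).
rewrite big_ord_recl /= mul0n mulr0 add0r.
under eq_bigr => j _ do rewrite /bump /= add1n exprS mulN1r mulNr.
rewrite sumrN => /eqP; rewrite eqr_oppLR => /eqP ->.
by case: eqP => [<-|_]; rewrite ?oppr0 // exprS mulN1r opprK.
Qed.

Theorem mainTheorem4 (n : nat) (p : int) (hp : p <= (n.+1)%:Z) :
  \sum_(0 <= k < n.+1) \sum_(0 <= j < k.+1)
     (('C(n, k) * stirling2 k j * stirling1z j.+1 p)%N%:Z * (-1) ^+ j)
  = (if p == (n.+1)%:Z then (-1) ^+ n else 0 : int).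
Proof.
have widen_inner k : (k < n.+1)%N ->
    \sum_(0 <= j < k.+1) ('C(n, k) * stirling2 k j * stirling1z j.+1 p)%N%:Z * (-1) ^+ j
  = \sum_(0 <= j < n.+1) ('C(n, k) * stirling2 k j * stirling1z j.+1 p)%N%:Z * (-1) ^+ j.
  move=> ltkn; rewrite (big_nat_widen _ _ n.+1) // big_mkcond /=.
  apply: eq_bigr => j _; case: ifP => // /negbT; rewrite -ltnNge => ltkj.
  by rewrite stirling2_small ?muln0 ?mul0n ?mul0r.
under eq_big_nat => k /andP[_ ltkn] do rewrite widen_inner //.
rewrite exchange_big /= big_mkord.
transitivity (\sum_(j < n.+1) (-1) ^+ j * (stirling2 n.+1 j.+1 * stirling1z j.+1 p)%:Z).
  apply: eq_bigr => j _.
  rewrite big_mkord -mulr_suml mulrC -sum_bin_stirling2 big_distrl /=.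
  by rewrite (big_morph Posz PoszD (erefl 0%:Z)).
case: p {hp widen_inner} => [p|p] /=; last first.
  by rewrite big1 // => j _; rewrite muln0 mulr0.
by rewrite stirling_orthogonality_shift eqz_nat eq_sym.
Qed.
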